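(* Let $(r_n)_{n\in\mathbb N}\subset L^0_+$ with $r_n\neq0$ for all $n$, and suppose that the set $\{\sup_{n\in\mathbb N}r_n>0\}$ is atomless (contains no atom of $\mathbb P$). Then there exists $r\in L^0_{++}$ such that $\mathbb P(r_n\ge r)>0$ for all $n\in\mathbb N$.
   Context: $(\Omega,\mathcal F,\mathbb P)$ is a probability space, $L^0$ the real-valued measurable functions modulo a.e. equality with a.e. order, $L^0_+=\{r\ge0\}$, $L^0_{++}=\{r>0\text{ a.e.}\}$; $\sup$ denotes the essential supremum. $r_n\ne0$ means $\mathbb P(r_n\ne 0)>0$. *)

From Stdlib Require Import Reals.
Open Scope R_scope.

Definition event (Omega : Type) := Omega -> Prop.

Record ProbSpace (Omega : Type) := {
  meas : event Omega -> Prop;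
  prob : event Omega -> R;
  meas_full : meas (fun _ => True);
  meas_compl : forall A, meas A -> meas (fun w => ~ A w);
  meas_cunion : forall A : nat -> event Omega,
      (forall n, meas (A n)) -> meas (fun w => exists n, A n w);
  prob_nonneg : forall A, meas A -> 0 <= prob A;
  prob_full : prob (fun _ => True) = 1;
  prob_sigma_additive : forall A : nat -> event Omega,
      (forall n, meas (A n)) ->
      (forall m n, m <> n -> forall w, A m w -> A n w -> False) ->
      Un_cv (fun N => sum_f_R0 (fun n => prob (A n)) N)
            (prob (fun w => exists n, A n w))
}.

Arguments meas {Omega} _ _.
Arguments prob {Omega} _ _.

(* F-measurable real random variables (elements of L^0, via representatives). *)
Definition measurable_fun {Omega : Type} (PS : ProbSpace Omega) (f : Omega -> R) : Prop :=
  forall a : R, meas PS (fun w => f w <= a).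

Definition is_atom {Omega : Type} (PS : ProbSpace Omega) (A : event Omega) : Prop :=
  meas PS A /\ 0 < prob PS A /\
  forall B, meas PS B -> (forall w, B w -> A w) ->
            prob PS B = 0 \/ prob PS B = prob PS A.

Definition atomless {Omega : Type} (PS : ProbSpace Omega) (S : event Omega) : Prop :=
  ~ exists A, is_atom PS A /\ (forall w, A w -> S w).

From Stdlib Require Import Reals Lra Lia Wf_nat Classical FunctionalExtensionality
  PropExtensionality ConstructiveEpsilon ClassicalEpsilon.
Open Scope R_scope.

(* Each r_k exceeds some level d_k > 0 with positive probability.  Since the
   sets {d_k < r_k} lie in the atomless set {sup_n r_n > 0}, they contain
   subsets D_k of positive probability at most 2^-k.  By Borel-Cantelli almost
   every w lies in only finitely many D_k, i.e. leaves the tails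
   T_m = U_{j >= m} D_j; put s(w) = min_{k <= m} d_k for the first m with
   w outside T_m.  Then s > 0 a.s., and on D_n the first exit happens after n,
   so s <= d_n < r_n on D_n. *)

Lemma sum_pow_half (N : nat) : sum_f_R0 (fun n => (/2)^n) N = 2 - (/2)^N.
Proof. induction N as [|N IH]; simpl sum_f_R0; [simpl; lra |]. rewrite IH; simpl; lra. Qed.

Fixpoint prefix_min (d : nat -> R) (n : nat) : R :=
  match n with
  | 0%nat => d 0%nat
  | S m => Rmin (prefix_min d m) (d (S m))
  end.

Lemma prefix_min_pos (d : nat -> R) : (forall k, 0 < d k) -> forall n, 0 < prefix_min d n.
Proof. intros Hd n; induction n; simpl; auto using Rmin_glb_lt. Qed.

Lemma prefix_min_le (d : nat -> R) (n : nat) : prefix_min d n <= d n.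
Proof. destruct n; simpl; [lra | apply Rmin_r]. Qed.

Lemma prefix_min_antitone (d : nat -> R) (m n : nat) :
  (m <= n)%nat -> prefix_min d n <= prefix_min d m.
Proof.
  induction 1; simpl; [lra |].
  eapply Rle_trans; [apply Rmin_l | auto].
Qed.

Section ProbabilitySpace.

Context {Omega : Type} (PS : ProbSpace Omega).

Lemma event_ext (A B : event Omega) : (forall w, A w <-> B w) -> A = B.
Proof.
  intro H; apply functional_extensionality; intro w.
  apply propositional_extensionality; auto.
Qed.

Lemma meas_ext (A B : event Omega) :
  (forall w, A w <-> B w) -> meas PS A -> meas PS B.
Proof. intro H; rewrite (event_ext A B H); auto. Qed.

Lemma prob_ext (A B : event Omega) :
  (forall w, A w <-> B w) -> prob PS A = prob PS B.
Proof. intro H; rewrite (event_ext A B H); auto. Qed.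

Lemma meas_prop (P : Prop) : meas PS (fun _ => P).
Proof.
  destruct (classic P) as [HP | HP].
  - apply (meas_ext (fun _ => True)); [tauto | apply meas_full].
  - apply (meas_ext (fun _ => ~ True)); [tauto | apply meas_compl, meas_full].
Qed.

Lemma meas_or (A B : event Omega) :
  meas PS A -> meas PS B -> meas PS (fun w => A w \/ B w).
Proof.
  intros HA HB.
  apply (meas_ext (fun w => exists n, (match n with 0%nat => A | _ => B end) w)).
  - intro w; split.
    + intros [[|n] H]; auto.
    + intros [H | H]; [exists 0%nat | exists 1%nat]; auto.
  - apply meas_cunion; intros [|n]; auto.
Qed.

Lemma meas_and (A B : event Omega) :
  meas PS A -> meas PS B -> meas PS (fun w => A w /\ B w).
Proof.
  intros HA HB.
  apply (meas_ext (fun w => ~ (~ A w \/ ~ B w))); [intro w; tauto |].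
  apply meas_compl, meas_or; apply meas_compl; auto.
Qed.

Lemma meas_cinter (A : nat -> event Omega) :
  (forall n, meas PS (A n)) -> meas PS (fun w => forall n, A n w).
Proof.
  intro HA.
  apply (meas_ext (fun w => ~ exists n, ~ A n w)).
  - intro w; split.
    + intros H n; apply NNPP; eauto.
    + intros H [n Hn]; auto.
  - apply meas_compl, meas_cunion; intro n; apply meas_compl; auto.
Qed.

Lemma prob_empty : prob PS (fun _ => False) = 0.
Proof.
  set (p := prob PS (fun _ => False)).
  assert (Hsum := prob_sigma_additive _ PS (fun _ _ => False)
                    (fun _ => meas_prop False) (fun _ _ _ _ H _ => H)).
  rewrite (prob_ext _ (fun _ => False)) in Hsum by (intro; firstorder).
  fold p in Hsum.
  assert (Hp : 0 <= p) by apply prob_nonneg, meas_prop.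
  destruct (Rle_lt_or_eq_dec _ _ Hp) as [Hlt | ]; auto.
  (* the partial sums (N + 1) p cannot converge to p unless p = 0 *)
  destruct (Hsum p Hlt) as [N0 HN].
  specialize (HN (S N0) ltac:(lia)).
  rewrite sum_cte in HN; unfold Rdist in HN.
  assert (INR (S (S N0)) >= 2) by (rewrite !S_INR; pose proof (pos_INR N0); lra).
  rewrite Rabs_right in HN; nra.
Qed.

Lemma prob_add (A B : event Omega) :
  meas PS A -> meas PS B -> (forall w, A w -> B w -> False) ->
  prob PS (fun w => A w \/ B w) = prob PS A + prob PS B.
Proof.
  intros HA HB Hdisj.
  set (F := fun n => match n with 0%nat => A | 1%nat => B | _ => fun _ => False end).
  assert (HF : forall n, meas PS (F n)) by (intros [|[|n]]; simpl; auto using meas_prop).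
  assert (HFdisj : forall m n, m <> n -> forall w, F m w -> F n w -> False)
    by (intros [|[|m]] [|[|n]] Hmn w; simpl; try tauto; try lia; eauto).
  assert (Hsum := prob_sigma_additive _ PS F HF HFdisj).
  rewrite (prob_ext _ (fun w => A w \/ B w)) in Hsum.
  2:{ intro w; split.
      - intros [[|[|n]] Hn]; simpl in Hn; tauto.
      - intros [H | H]; [exists 0%nat | exists 1%nat]; auto. }
  apply (UL_sequence _ _ _ Hsum).
  intros e He; exists 1%nat; intros N HN.
  replace (sum_f_R0 (fun n => prob PS (F n)) N) with (prob PS A + prob PS B).
  - unfold Rdist; rewrite Rminus_diag, Rabs_R0; auto.
  - destruct N as [|N]; [lia |]; clear HN.
    induction N as [|N IH]; [simpl; ring |].
    rewrite tech5, <- IH; simpl; rewrite prob_empty; ring.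
Qed.

Lemma prob_mono (A B : event Omega) :
  meas PS A -> meas PS B -> (forall w, A w -> B w) -> prob PS A <= prob PS B.
Proof.
  intros HA HB HAB.
  assert (HBA : meas PS (fun w => B w /\ ~ A w)) by (apply meas_and, meas_compl; auto).
  rewrite (prob_ext B (fun w => A w \/ (B w /\ ~ A w)))
    by (intro w; generalize (HAB w); tauto).
  rewrite prob_add by (auto; tauto).
  pose proof (prob_nonneg _ PS _ HBA); lra.
Qed.

Lemma prob_compl (A : event Omega) :
  meas PS A -> prob PS (fun w => ~ A w) = 1 - prob PS A.
Proof.
  intro HA; rewrite <- (prob_full _ PS).
  rewrite (prob_ext (fun _ => True) (fun w => A w \/ ~ A w)) by (intro; tauto).
  rewrite prob_add; auto using meas_compl; lra.
Qed.

Lemma prob_le1 (A : event Omega) : meas PS A -> prob PS A <= 1.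
Proof.
  intro HA; rewrite <- (prob_full _ PS).
  apply prob_mono; auto using meas_full.
Qed.

Lemma prob_cunion_le (A : nat -> event Omega) (c : R) :
  (forall n, meas PS (A n)) ->
  (forall N, sum_f_R0 (fun n => prob PS (A n)) N <= c) ->
  prob PS (fun w => exists n, A n w) <= c.
Proof.
  intros HA Hc.
  set (G := fun n w => A n w /\ forall j, (j < n)%nat -> ~ A j w).
  assert (HG : forall n, meas PS (G n)).
  { intro n; apply meas_and; auto.
    apply (meas_ext (fun w => forall j, ~ (j < n)%nat \/ ~ A j w)).
    - intro w; split; [intros H j Hj; destruct (H j); tauto |].
      intros H j; destruct (classic (j < n)%nat); auto.
    - apply meas_cinter; intro j; apply meas_or; auto using meas_prop, meas_compl. }
  assert (HGdisj : forall m n, m <> n -> forall w, G m w -> G n w -> False).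
  { intros m n Hmn w [Hm Hm'] [Hn Hn'].
    destruct (proj1 (Nat.lt_gt_cases m n) Hmn) as [H | H];
      [exact (Hn' m H Hm) | exact (Hm' n H Hn)]. }
  assert (Hsum := prob_sigma_additive _ PS G HG HGdisj).
  rewrite (prob_ext _ (fun w => exists n, A n w)) in Hsum.
  2:{ intro w; split; [intros [n [Hn _]]; eauto | intro Hex].
      (* disjointification: keep the least index *)
      destruct (dec_inh_nat_subset_has_unique_least_element (fun n => A n w)
                  (fun n => classic _) Hex) as [n [[Hn Hleast] _]].
      exists n; split; auto.
      intros j Hj Aj; specialize (Hleast j Aj); lia. }
  refine (@Rle_cv_lim _ (fun _ => c) _ c _ Hsum _).
  - intro N; eapply Rle_trans; [| apply (Hc N)].
    apply sum_Rle; intros n _; apply prob_mono; auto; intros w [Hw _]; auto.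
  - intros e He; exists 0%nat; intros; unfold Rdist; rewrite Rminus_diag, Rabs_R0; auto.
Qed.

Lemma meas_gt (f : Omega -> R) (c : R) :
  measurable_fun PS f -> meas PS (fun w => c < f w).
Proof.
  intro Hf; apply (meas_ext (fun w => ~ f w <= c)); [intro; lra |].
  apply meas_compl, Hf.
Qed.

Lemma meas_ge (f : Omega -> R) (c : R) :
  measurable_fun PS f -> meas PS (fun w => c <= f w).
Proof.
  intro Hf.
  apply (meas_ext (fun w => ~ exists j, f w <= c - / INR (S j))).
  - intro w; split.
    + intro H; apply Rnot_lt_le; intro Hlt.
      destruct (archimed_cor1 (c - f w)) as [N [HN HN0]]; [lra |].
      apply H; exists (pred N); replace (S (pred N)) with N by lia; lra.
    + intros H [j Hj].
      assert (0 < / INR (S j)) by (apply Rinv_0_lt_compat, lt_0_INR; lia); lra.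
  - apply meas_compl, meas_cunion; intro j; apply Hf.
Qed.

Lemma prob_pos_of_nonneg_nonzero (f : Omega -> R) :
  measurable_fun PS f -> prob PS (fun w => 0 <= f w) = 1 ->
  0 < prob PS (fun w => f w <> 0) -> 0 < prob PS (fun w => 0 < f w).
Proof.
  intros Hf Hnonneg Hnz.
  assert (Hge := meas_ge f 0 Hf).
  assert (Hgt := meas_gt f 0 Hf).
  assert (Hle : prob PS (fun w => f w <> 0)
                <= prob PS (fun w => 0 < f w \/ ~ 0 <= f w)).
  { apply prob_mono; [| apply meas_or; auto using meas_compl | intros w Hw; lra].
    apply (meas_ext (fun w => ~ (f w <= 0 /\ 0 <= f w))); [intro; lra |].
    apply meas_compl, meas_and; auto. }
  rewrite prob_add, (prob_compl (fun w => 0 <= f w)), Hnonneg in Hle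
    by solve [auto using meas_compl | intros w; lra].
  lra.
Qed.

Lemma exists_level_prob_pos (f : Omega -> R) :
  measurable_fun PS f -> 0 < prob PS (fun w => 0 < f w) ->
  exists c, 0 < c /\ 0 < prob PS (fun w => c < f w).
Proof.
  intros Hf Hpos; apply NNPP; intro Hno.
  assert (Hnull : forall j, prob PS (fun w => / INR (S j) < f w) = 0).
  { intro j.
    assert (Hj : 0 < / INR (S j)) by (apply Rinv_0_lt_compat, lt_0_INR; lia).
    destruct (Rle_lt_or_eq_dec _ _ (prob_nonneg _ PS _ (meas_gt f (/ INR (S j)) Hf)))
      as [Hlt | ]; auto.
    exfalso; eauto. }
  assert (Hcover : prob PS (fun w => 0 < f w)
                   <= prob PS (fun w => exists j, / INR (S j) < f w)).
  { apply prob_mono; auto using meas_gt.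
    - apply meas_cunion; intro; apply meas_gt, Hf.
    - intros w Hw; destruct (archimed_cor1 (f w)) as [N [HN HN0]]; auto.
      exists (pred N); replace (S (pred N)) with N by lia; auto. }
  assert (prob PS (fun w => exists j, / INR (S j) < f w) <= 0).
  { apply prob_cunion_le; [intro; apply meas_gt, Hf |].
    intro N; rewrite (sum_eq _ (fun _ => 0)) by (intros; apply Hnull).
    rewrite sum_cte; lra. }
  lra.
Qed.


Lemma atomless_halve (S E : event Omega) :
  atomless PS S -> meas PS E -> (forall w, E w -> S w) -> 0 < prob PS E ->
  exists D, meas PS D /\ (forall w, D w -> E w) /\
            0 < prob PS D /\ prob PS D <= prob PS E / 2.
Proof.
  intros Hat HE HES HpE.
  assert (Hsplit : exists B, meas PS B /\ (forall w, B w -> E w) /\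
                             prob PS B <> 0 /\ prob PS B <> prob PS E).
  { apply NNPP; intro Hno; apply Hat; exists E.
    split; [split; [auto | split; [auto |]] | auto].
    intros B HB HBE.
    destruct (Req_dec (prob PS B) 0); auto.
    destruct (Req_dec (prob PS B) (prob PS E)); auto.
    exfalso; apply Hno; exists B; auto. }
  destruct Hsplit as [B [HB [HBE [HB0 HBE']]]].
  assert (HC : meas PS (fun w => E w /\ ~ B w)) by (apply meas_and, meas_compl; auto).
  assert (Hsum : prob PS E = prob PS B + prob PS (fun w => E w /\ ~ B w)).
  { rewrite <- prob_add by (auto; tauto).
    apply prob_ext; intro w; generalize (HBE w); tauto. }
  assert (HpB := prob_nonneg _ PS B HB).
  assert (HpC := prob_nonneg _ PS _ HC).
  (* B and E \ B both have positive probability; keep the smaller one *)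
  destruct (Rle_lt_dec (prob PS B) (prob PS E / 2)).
  - exists B; repeat split; auto; lra.
  - exists (fun w => E w /\ ~ B w); repeat split; auto; [intros w [Hw _]; auto | lra | lra].
Qed.

Lemma atomless_small_subset (S E : event Omega) :
  atomless PS S -> meas PS E -> (forall w, E w -> S w) -> 0 < prob PS E ->
  forall m, exists D, meas PS D /\ (forall w, D w -> E w) /\
                      0 < prob PS D /\ prob PS D <= (/2)^m.
Proof.
  intros Hat HE HES HpE m; induction m as [|m IH].
  - exists E; repeat split; auto; simpl; apply prob_le1; auto.
  - destruct IH as [D [HD [HDE [HpD HDm]]]].
    destruct (atomless_halve S D Hat HD (fun w Hw => HES w (HDE w Hw)) HpD)
      as [D' [HD' [HD'D [HpD' HD'half]]]].
    exists D'; repeat split; auto; simpl; lra.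
Qed.

Definition tail_union (D : nat -> event Omega) (m : nat) : event Omega :=
  fun w => exists j, D (m + j)%nat w.

Lemma tail_union_of_mem (D : nat -> event Omega) (k n : nat) (w : Omega) :
  D n w -> (k <= n)%nat -> tail_union D k w.
Proof.
  intros Hw Hkn; exists (n - k)%nat.
  replace (k + (n - k))%nat with n by lia; auto.
Qed.

Lemma meas_tail_union (D : nat -> event Omega) :
  (forall k, meas PS (D k)) -> forall m, meas PS (tail_union D m).
Proof. intros HD m; apply meas_cunion; auto. Qed.

Lemma prob_tail_union_le (D : nat -> event Omega) :
  (forall k, meas PS (D k)) -> (forall k, prob PS (D k) <= (/2)^k) ->
  forall m, prob PS (tail_union D m) <= 2 * (/2)^m.
Proof.
  intros HD HpD m; apply prob_cunion_le; auto.
  intro N; eapply Rle_trans.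
  - apply sum_Rle with (Bn := fun n => (/2)^n * (/2)^m); intros n _.
    rewrite Rmult_comm, <- pow_add; apply HpD.
  - rewrite <- scal_sum, sum_pow_half.
    assert (0 < (/2)^m) by (apply pow_lt; lra).
    assert (0 < (/2)^N) by (apply pow_lt; lra).
    nra.
Qed.

Lemma prob_exists_notin_eq1 (T : nat -> event Omega) :
  (forall m, meas PS (T m)) -> (forall m, prob PS (T m) <= 2 * (/2)^m) ->
  prob PS (fun w => exists m, ~ T m w) = 1.
Proof.
  intros HT HpT.
  set (p := prob PS (fun w => exists m, ~ T m w)).
  assert (Hmeas : meas PS (fun w => exists m, ~ T m w))
    by (apply meas_cunion; intro; apply meas_compl; auto).
  assert (Hlow : forall m, 1 - 2 * (/2)^m <= p).
  { intro m; specialize (HpT m).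
    assert (Hout : prob PS (fun w => ~ T m w) <= p) by (apply prob_mono; eauto using meas_compl).
    rewrite prob_compl in Hout; auto; lra. }
  apply Rle_antisym; [apply prob_le1; auto |].
  apply Rnot_lt_le; intro Hlt.
  destruct (pow_lt_1_zero (/2)) with (y := (1 - p) / 2) as [N HN].
  - rewrite Rabs_right; lra.
  - lra.
  - specialize (HN N (le_n N)); specialize (Hlow N).
    rewrite Rabs_right in HN; [lra | apply Rle_ge, pow_le; lra].
Qed.

Definition first_exit (T : nat -> event Omega) (w : Omega) (m : nat) : Prop :=
  ~ T m w /\ forall k, (k < m)%nat -> T k w.

(* [exit_value T v w] is [v m] for the first [m] with [w] outside [T m],
   and [0] if [w] lies in every [T m]. *)
Definition exit_value (T : nat -> event Omega) (v : nat -> R) (w : Omega) : R :=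
  match excluded_middle_informative (exists m, ~ T m w) with
  | left H => v (proj1_sig (epsilon_smallest _ (fun m => excluded_middle_informative _) H))
  | right _ => 0
  end.

Lemma first_exit_unique (T : nat -> event Omega) (w : Omega) (m n : nat) :
  first_exit T w m -> first_exit T w n -> m = n.
Proof.
  intros [Hm Hm'] [Hn Hn'].
  destruct (Nat.lt_trichotomy m n) as [H | [H | H]]; auto; exfalso; auto.
Qed.

Lemma exit_value_spec (T : nat -> event Omega) (v : nat -> R) (w : Omega) :
  (exists m, first_exit T w m /\ exit_value T v w = v m) \/
  ((forall m, T m w) /\ exit_value T v w = 0).
Proof.
  unfold exit_value; destruct (excluded_middle_informative _) as [H | H].
  - left; destruct (epsilon_smallest _ _ H) as [m [Hm Hleast]]; simpl.
    exists m; repeat split; auto.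
    intros k Hk; apply NNPP; intro Hn; specialize (Hleast k Hn); lia.
  - right; split; auto.
    intro m; apply NNPP; intro; apply H; eauto.
Qed.

Lemma meas_exit_value_le (T : nat -> event Omega) (v : nat -> R) (g : Omega -> R) :
  (forall m, meas PS (T m)) -> (forall c, meas PS (fun w => c <= g w)) ->
  meas PS (fun w => exit_value T v w <= g w).
Proof.
  intros HT Hg.
  apply (meas_ext (fun w => (exists m, first_exit T w m /\ v m <= g w)
                            \/ ((forall m, T m w) /\ 0 <= g w))).
  - intro w; destruct (exit_value_spec T v w) as [[m [Hm ->]] | [Hall ->]]; split.
    + intros [[n [Hn Hle]] | [Hall _]].
      * rewrite (first_exit_unique T w m n); auto.
      * exfalso; apply (proj1 Hm), Hall.
    + intro; left; exists m; auto.
    + intros [[n [[Hn _] _]] | [_ Hle]]; auto.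
      exfalso; apply Hn, Hall.
    + intro; right; auto.
  - apply meas_or.
    + apply meas_cunion; intro m; apply meas_and; auto.
      apply meas_and; [apply meas_compl; auto |].
      apply (meas_ext (fun w => forall k, ~ (k < m)%nat \/ T k w)).
      * intro w; split; [intros H k Hk; destruct (H k); tauto |].
        intros H k; destruct (classic (k < m)%nat); auto.
      * apply meas_cinter; intro k; apply meas_or; auto using meas_prop.
    + apply meas_and; auto using meas_cinter.
Qed.

Lemma measurable_exit_value (T : nat -> event Omega) (v : nat -> R) :
  (forall m, meas PS (T m)) -> measurable_fun PS (exit_value T v).
Proof.
  intros HT a; apply (meas_exit_value_le T v (fun _ => a)); auto using meas_prop.
Qed.

Lemma exit_value_pos (T : nat -> event Omega) (v : nat -> R) (w : Omega) (m : nat) :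
  (forall k, 0 < v k) -> ~ T m w -> 0 < exit_value T v w.
Proof.
  intros Hv Hm; destruct (exit_value_spec T v w) as [[k [_ ->]] | [Hall _]]; auto.
  exfalso; apply Hm, Hall.
Qed.

Lemma exit_value_le (T : nat -> event Omega) (v : nat -> R) (w : Omega) (n : nat) :
  (forall k, 0 <= v k) -> (forall m k, (m <= k)%nat -> v k <= v m) ->
  (forall k, (k <= n)%nat -> T k w) -> exit_value T v w <= v n.
Proof.
  intros Hv Hanti HT.
  destruct (exit_value_spec T v w) as [[m [[Hm _] ->]] | [_ ->]]; auto.
  apply Hanti; destruct (Nat.le_gt_cases m n); [exfalso; auto | lia].
Qed.

Lemma prob_exit_value_pos (T : nat -> event Omega) (v : nat -> R) :
  (forall m, meas PS (T m)) -> (forall m, prob PS (T m) <= 2 * (/2)^m) ->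
  (forall k, 0 < v k) -> prob PS (fun w => 0 < exit_value T v w) = 1.
Proof.
  intros HT HpT Hv.
  apply Rle_antisym; [apply prob_le1, meas_gt, measurable_exit_value; auto |].
  rewrite <- (prob_exists_notin_eq1 T HT HpT).
  apply prob_mono; [| apply meas_gt, measurable_exit_value; auto |].
  - apply meas_cunion; intro m; apply meas_compl; auto.
  - intros w [m Hm]; apply (exit_value_pos _ _ _ m); auto.
Qed.

Lemma exit_value_tail_union_le (D : nat -> event Omega) (d : nat -> R) (w : Omega) (n : nat) :
  (forall k, 0 < d k) -> D n w -> exit_value (tail_union D) (prefix_min d) w <= d n.
Proof.
  intros Hd Hw.
  apply Rle_trans with (prefix_min d n); [| apply prefix_min_le].
  apply exit_value_le; [intro k; left; apply prefix_min_pos; auto | apply prefix_min_antitone |].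
  intros k Hk; apply (tail_union_of_mem D k n w); auto.
Qed.

End ProbabilitySpace.

Theorem lemma5p1 (Omega : Type) (PS : ProbSpace Omega) (r : nat -> Omega -> R)
  (Hmeas : forall n, measurable_fun PS (r n))
  (Hpos : forall n, prob PS (fun w => 0 <= r n w) = 1)
  (Hnz : forall n, 0 < prob PS (fun w => r n w <> 0))
  (Hatomless : atomless PS (fun w => exists n, 0 < r n w)) :
  exists s : Omega -> R,
    measurable_fun PS s /\
    prob PS (fun w => 0 < s w) = 1 /\
    forall n, 0 < prob PS (fun w => s w <= r n w).
Proof.
  assert (Hlevel : forall k, exists c, 0 < c /\ 0 < prob PS (fun w => c < r k w))
    by (intro k; apply exists_level_prob_pos, prob_pos_of_nonneg_nonzero; auto).
  destruct (choice _ Hlevel) as [d Hd].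
  assert (Hsmall : forall k, exists D, meas PS D /\ (forall w, D w -> d k < r k w) /\
                                       0 < prob PS D /\ prob PS D <= (/2)^k).
  { intro k; destruct (Hd k) as [Hdk HpE].
    apply (atomless_small_subset PS _ _ Hatomless); auto using meas_gt.
    intros w Hw; exists k; lra. }
  destruct (choice _ Hsmall) as [D HD].
  assert (HDmeas : forall k, meas PS (D k)) by apply HD.
  assert (HDsmall : forall k, prob PS (D k) <= (/2)^k) by apply HD.
  assert (Hd_pos : forall k, 0 < d k) by apply Hd.
  exists (exit_value (tail_union D) (prefix_min d)); split; [| split].
  - apply measurable_exit_value, meas_tail_union; auto.
  - apply prob_exit_value_pos; auto using meas_tail_union, prob_tail_union_le, prefix_min_pos.
  - intro n; destruct (HD n) as [_ [HDr [HpD _]]].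
    eapply Rlt_le_trans; [exact HpD |].
    apply prob_mono; auto.
    + apply meas_exit_value_le; auto using meas_tail_union, meas_ge.
    + intros w Hw; specialize (HDr w Hw).
      pose proof (exit_value_tail_union_le D d w n Hd_pos Hw); lra.
Qed.
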